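(* Let $\bm{\Theta}\ni\bm{\theta}\mapsto\bm{P}_{\bm{\theta}}$ be any measurable parameterization of probability measures on $\mathbb{X}^\infty$, let $\bm{\pi}$ be a probability measure on $\bm{\Theta}$, and let $\bm{P}(x)=\int\bm{P}_{\bm{\theta}}(x)\,d\bm{\pi}(\bm{\theta})$. Then $\bm{P}_{\bm{\theta}}(\mathcal{B}_{\bm{P}})=1$ for $\bm{\pi}$-almost all $\bm{\theta}\in\bm{\Theta}$.
   Context: $\mathbb{X}$ is a countable alphabet, $\mathbb{Y}=\{0,1,\ldots,D-1\}$, $\log$ is logarithm to base $D$, $x^n$ is the length-$n$ prefix of $\bm{x}\in\mathbb{X}^\infty$, and $\bm{P}(x)$ for a string $x$ is the measure of the set of sequences beginning with $x$. $K$ denotes prefix Kolmogorov complexity for a fixed universal prefix machine with programs over $\mathbb{Y}$. $\mathcal{B}_{\bm{P}}$ (the $\bm{P}$-Barron random sequences) is the set of $\bm{x}\in\mathbb{X}^\infty$ such that $K(x^n)+\log\bm{P}(x^n)>0$ for all but finitely many $n\in\mathbb{N}$. *)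

From HB Require Import structures.
From mathcomp Require Import all_boot all_order all_algebra.
From mathcomp Require Import all_classical all_reals all_analysis.
Set Implicit Arguments. Unset Strict Implicit. Unset Printing Implicit Defensive.
Import Order.TTheory GRing.Theory Num.Theory.
Local Open Scope classical_set_scope.
Local Open Scope ring_scope.

Inductive prf : Type :=
| PZero
| PSucc
| PProj of nat
| PComp of prf & seq prf
| PRec of prf & prf
| PMin of prf.

Inductive eval : prf -> seq nat -> nat -> Prop :=
| eval_zero v : eval PZero v 0
| eval_succ v : eval PSucc v (head 0%N v).+1
| eval_proj i v : eval (PProj i) v (nth 0%N v i)
| eval_comp f gs v ws r : evals gs v ws -> eval f ws r -> eval (PComp f gs) v r
| eval_rec0 f g v r : eval f v r -> eval (PRec f g) (0%N :: v) r
| eval_recS f g n v r r' :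
    eval (PRec f g) (n :: v) r -> eval g (n :: r :: v) r' ->
    eval (PRec f g) (n.+1 :: v) r'
| eval_min f v n :
    eval f (n :: v) 0 ->
    (forall m, (m < n)%N -> exists k, (0 < k)%N /\ eval f (m :: v) k) ->
    eval (PMin f) v n
with evals : seq prf -> seq nat -> seq nat -> Prop :=
| evals_nil v : evals [::] v [::]
| evals_cons g gs v w ws : eval g v w -> evals gs v ws -> evals (g :: gs) v (w :: ws).

Section Machines.
Variables (X : countType) (D : nat).

Definition machine := seq 'I_D -> option (seq X).

Definition computes (e : prf) (M : machine) : Prop :=
  forall (p : seq 'I_D) (x : seq X), M p = Some x <-> eval e [:: pickle p] (pickle x).

Definition partial_recursive (M : machine) : Prop := exists e, computes e M.

Definition prefix_free (M : machine) : Prop :=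
  forall p q : seq 'I_D, M p <> None -> M q <> None -> prefix p q -> p = q.

Definition prefix_machine (M : machine) : Prop :=
  partial_recursive M /\ prefix_free M.

Definition universal_prefix_machine (U : machine) : Prop :=
  prefix_machine U /\
  forall M : machine, prefix_machine M ->
    exists s : seq 'I_D, forall p, U (s ++ p) = M p.

(* prefix Kolmogorov complexity K_U(x) (+oo if x has no program) *)
Definition KU {R : realType} (U : machine) (x : seq X) : \bar R :=
  ereal_inf [set ((size p)%:R)%:E | p in [set p | U p = Some x]].

End Machines.

Definition seqs (X : Type) (x0 : X) := nat -> X.
HB.instance Definition _ (X : Type) (x0 : X) :=
  gen_eqMixin (seqs x0).
HB.instance Definition _ (X : Type) (x0 : X) :=
  gen_choiceMixin (seqs x0).
HB.instance Definition _ (X : Type) (x0 : X) :=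
  isPointed.Build (seqs x0) (fun _ => x0).

Definition pre (X : Type) (n : nat) (w : nat -> X) : seq X := [seq w i | i <- iota 0 n].

Definition cyl (X : Type) (x0 : X) (x : seq X) : set (seqs x0) :=
  [set w | pre (size x) w = x].

Definition cylinders (X : Type) (x0 : X) : set (set (seqs x0)) := range (@cyl X x0).

Notation Xinf x0 := (g_sigma_algebraType (@cylinders _ x0)).

Definition mixture (R : realType) (X : Type) (x0 : X) (dT : measure_display)
    (Theta : measurableType dT) (k : R.-ker Theta ~> Xinf x0)
    (pi : {measure set Theta -> \bar R}) (x : seq X) : \bar R :=
  (\int[pi]_th k th (@cyl X x0 x))%E.

(* K(x) + log_D P(x) > 0, with log_D 0 = -oo (so P(x) > 0 is required) *)
Definition barron_ok (R : realType) (X : countType) (D : nat)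
    (U : machine X D) (P : seq X -> \bar R) (x : seq X) : Prop :=
  (0 < P x)%E /\ (0 < KU U x + (ln (fine (P x)) / ln (D%:R))%:E)%E.

Definition barron_set (R : realType) (X : countType) (x0 : X) (D : nat)
    (U : machine X D) (P : seq X -> \bar R) : set (Xinf x0) :=
  [set w | exists N, forall n, (N <= n)%N -> barron_ok U P (pre n w)].

From HB Require Import structures.
From mathcomp Require Import all_boot all_order all_algebra.
From mathcomp Require Import all_classical all_reals all_analysis.
From mathcomp Require Import measurable_realfun lra.
Set Implicit Arguments. Unset Strict Implicit. Unset Printing Implicit Defensive.
Import Order.TTheory GRing.Theory Num.Theory.
Local Open Scope classical_set_scope.
Local Open Scope ring_scope.

(* If x^n fails the Barron test, a shortest program p for x^n satisfies
   P(x^n) <= D^-|p|.  The domain of U is prefix-free, so by Kraft's inequality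
   the cylinders of all failing strings have total P-mass at most 1.  As P is
   the pi-average of the P_theta, for pi-almost every theta the P_theta-masses
   of these cylinders have a finite sum, and by Borel-Cantelli P_theta-almost
   every sequence has only finitely many failing prefixes. *)

Section Kraft.
Variables (R : numFieldType) (D : nat).
Hypothesis D_gt0 : (0 < D)%N.

Definition prefix_free_seq (s : seq (seq 'I_D)) :=
  {in s &, forall p q, prefix p q -> p = q}.

Local Notation weight p := ((D%:R : R) ^- size p).

Lemma prefix_free_seq_nil s :
  uniq s -> prefix_free_seq s -> [::] \in s -> s = [:: [::]].
Proof.
move=> us pf ns.
have all_nil q : q \in s -> q = [::].
  by move=> qs; apply/esym/pf => //; exact: prefix0s.
clear pf; case: s us ns all_nil => [//|p [|q s]] us _ all_nil.
  by rewrite (all_nil p) ?mem_head.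
by move: us; rewrite (all_nil p) ?mem_head // (all_nil q) ?inE ?eqxx ?orbT.
Qed.

Definition tails_with_head (a : 'I_D) (s : seq (seq 'I_D)) :=
  [seq behead p | p <- s & ohead p == Some a].

Lemma sum_weight_by_head s : [::] \notin s ->
  \sum_(p <- s) weight p =
  \sum_(a : 'I_D) (D%:R)^-1 * \sum_(t <- tails_with_head a s) weight t.
Proof.
move=> ns; transitivity
  (\sum_(p <- s) \sum_(a : 'I_D) (if ohead p == Some a then weight p else 0)).
  rewrite big_seq [RHS]big_seq; apply: eq_bigr => -[|b p] ps; first by rewrite ps in ns.
  by rewrite -big_mkcond (big_pred1 b) // => a; rewrite /= eq_sym.
rewrite exchange_big; apply: eq_bigr => a _.
rewrite big_map big_filter big_distrr [RHS]big_mkcond big_seq [RHS]big_seq.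
apply: eq_bigr => -[|b p] ps; first by rewrite ps in ns.
by case: ifP => // _; rewrite /= exprS invfM mulrC.
Qed.

Lemma uniq_tails_with_head a s : uniq s -> uniq (tails_with_head a s).
Proof.
move=> us; rewrite map_inj_in_uniq ?filter_uniq // => p q.
rewrite !mem_filter => /andP[hp _] /andP[hq _].
by case: p q hp hq => [|b p] [|c q] //= /eqP[->] /eqP[->] ->.
Qed.

Lemma prefix_free_tails_with_head a s :
  prefix_free_seq s -> prefix_free_seq (tails_with_head a s).
Proof.
move=> pf t u /mapP[p + ->] /mapP[q + ->]; rewrite !mem_filter.
move=> /andP[hp ps] /andP[hq qs] pq.
have := pf p q ps qs.
case: p q hp hq ps qs pq => [|b p] [|c q] //= /eqP[->] /eqP[->] _ _ pq.
by rewrite eqxx pq => /(_ isT) [->].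
Qed.

Lemma kraft_bounded L s : uniq s -> prefix_free_seq s ->
  all (fun p => size p <= L)%N s -> \sum_(p <- s) weight p <= 1.
Proof.
elim: L s => [|L IH] s us pf sz.
  case: s us pf sz => [|p s] us pf; first by rewrite big_nil.
  rewrite /= leqn0 size_eq0 => /andP[/eqP p_nil _].
  by rewrite (prefix_free_seq_nil us pf) ?p_nil ?mem_head // big_seq1 expr0 invr1.
have [ns|ns] := boolP ([::] \in s).
  by rewrite (prefix_free_seq_nil us pf ns) big_seq1 expr0 invr1.
rewrite sum_weight_by_head //.
apply: (le_trans (y := \sum_(a : 'I_D) (D%:R : R)^-1)).
  apply: ler_sum => a _; rewrite -[leRHS]mulr1 ler_wpM2l ?invr_ge0 //; apply: IH.
  - exact: uniq_tails_with_head.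
  - exact: prefix_free_tails_with_head.
  apply/allP => t /mapP[p + ->]; rewrite mem_filter => /andP[_ ps].
  by move/allP: sz => /(_ p ps); rewrite size_behead; case: (size p).
by rewrite sumr_const card_ord -[_ *+ D]mulr_natr mulVf // pnatr_eq0 -lt0n.
Qed.

Theorem kraft_inequality s : uniq s -> prefix_free_seq s ->
  \sum_(p <- s) weight p <= 1.
Proof.
move=> us pf; apply: (kraft_bounded (L := \max_(p <- s) size p)%N) => //.
by apply/allP => p ps; apply: leq_bigmax_seq.
Qed.

End Kraft.

Section Cylinders.
Variables (X : Type) (x0 : X).

Lemma size_pre n (w : nat -> X) : size (pre n w) = n.
Proof. by rewrite /pre size_map size_iota. Qed.

Lemma cyl_pre n (w : seqs x0) : @cyl _ x0 (pre n w) w.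
Proof. by rewrite /cyl /= size_pre. Qed.

Lemma measurable_cyl x : measurable (@cyl _ x0 x : set (Xinf x0)).
Proof. by apply: sub_sigma_algebra; exists x. Qed.

End Cylinders.

Lemma measurable_pre_preimage (X : countType) (x0 : X) n (Q : seq X -> Prop) :
  measurable [set w : Xinf x0 | Q (pre n w)].
Proof.
have -> : [set w : Xinf x0 | Q (pre n w)] =
    \bigcup_(x in [set x | Q x /\ size x = n]) @cyl _ x0 x.
  apply/seteqP; split => w /=.
    by move=> Qw; exists (pre n w); [rewrite /= size_pre | exact: cyl_pre].
  by move=> [x [Qx <-] /= ->].
rewrite bigcup_mkcond; apply: countable_bigcupT_measurable => [|x].
  exact: countableP.
by case: ifP => _; [exact: measurable_cyl | exact: measurable0].
Qed.

Lemma pickle_pre_ge (X : countType) (M : nat) :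
  exists N, forall n (w : nat -> X), (N < n)%N -> (M <= pickle (pre n w))%N.
Proof.
pose size_of (i : 'I_M) := if pickle_inv i is Some y then size (y : seq X) else 0%N.
exists (\max_i size_of i)%N => n w lt_Nn; rewrite leqNgt; apply/negP => lt_M.
have := @leq_bigmax _ size_of (Ordinal lt_M).
by rewrite /size_of /= pickleK_inv size_pre leqNgt lt_Nn.
Qed.

Lemma le_exprVn_of_logb (R : realType) (b r : R) (n : nat) : 1 < b -> 0 < r ->
  n%:R + ln r / ln b <= 0 -> r <= b ^- n.
Proof.
move=> b_gt1 r_gt0 h.
have lnb_gt0 : 0 < ln b by exact: ln_gt0.
have : ln r / ln b <= - n%:R by lra.
rewrite ler_pdivrMr // mulNr => lnr_le.
rewrite -[r]lnK ?posrE // (le_trans (y := expR (- (n%:R * ln b)))) ?ler_expR //.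
by rewrite expRN expRM_natl lnK // posrE (lt_trans ltr01).
Qed.

Section Complexity.
Variables (R : realType) (X : countType) (D : nat) (U : machine X D).

Lemma KU_no_program x : (forall p, U p <> Some x) -> KU U x = +oo%E :> \bar R.
Proof.
move=> no_prog; apply/eqP; rewrite eq_le leey /=.
by apply: le_ereal_inf_tmp => y [p Up _]; case: (no_prog p Up).
Qed.

Lemma KU_attained x p : U p = Some x ->
  exists2 q, U q = Some x & KU U x = (size q)%:R%:E :> \bar R.
Proof.
move=> Up.
have has_prog : exists n, `[< exists q, size q = n /\ U q = Some x >].
  by exists (size p); apply/asboolP; exists p.
case: (ex_minnP has_prog) => _ /asboolP[q [<- Uq]] min_q.
exists q => //; apply/eqP; rewrite eq_le; apply/andP; split.
  by apply: ereal_inf_lbound; exists q.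
apply: le_ereal_inf_tmp => y [q' /= Uq' <-]; rewrite lee_fin ler_nat.
by apply: min_q; apply/asboolP; exists q'.
Qed.

Hypothesis D_gt1 : (1 < D)%N.

Lemma program_of_not_barron_ok (P : seq X -> \bar R) x :
  (0 < P x)%E -> P x \is a fin_num -> ~ barron_ok U P x ->
  exists2 p, U p = Some x & (P x <= ((D%:R : R) ^- size p)%:E)%E.
Proof.
move=> Px_gt0 Px_fin not_ok.
have [[p Up]|no_prog] := pselect (exists p, U p = Some x); last first.
  case: not_ok; split => //; rewrite KU_no_program /= ?ltry // => p Up.
  by apply: no_prog; exists p.
have [q Uq KUq] := KU_attained Up.
exists q => //; rewrite -(fineK Px_fin) lee_fin le_exprVn_of_logb ?ltr1n //.
  by rewrite -lte_fin fineK.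
rewrite leNgt; apply/negP => h; apply: not_ok; split => //.
by rewrite KUq -EFinD lte_fin.
Qed.

End Complexity.

Section Mixture.
Variables (R : realType) (X : Type) (x0 : X).
Variables (dT : measure_display) (Theta : measurableType dT).
Variables (k : R.-spker Theta ~> Xinf x0) (pi : probability Theta R).

Local Notation P := (mixture k pi).

Lemma mixture_ge0 x : (0 <= P x)%E.
Proof. exact: integral_ge0. Qed.

Lemma mixture_le1 x : (P x <= 1)%E.
Proof.
apply: (@le_trans _ _ (\int[pi]_(th in setT) 1)%E).
  apply: ge0_le_integral => //.
  - exact: measurable_kernel k _ (@measurable_cyl _ x0 x).
  - move=> th _; apply: le_trans (sprob_kernel_le1 k th).
    by apply: le_measure; rewrite ?inE //; exact: measurable_cyl.
by rewrite integral_cst // mul1e probability_le1.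
Qed.

Lemma mixture_fin_num x : P x \is a fin_num.
Proof. by rewrite ge0_fin_numE ?mixture_ge0 // (le_lt_trans (mixture_le1 x)) ?ltry. Qed.

End Mixture.

Section BarronRandomness.
Variables (R : realType) (X : countType) (x0 : X) (D : nat).
Hypothesis D_gt1 : (1 < D)%N.
Variables (U : machine X D).
Hypothesis U_prefix_free : prefix_free U.
Variables (dT : measure_display) (Theta : measurableType dT).
Variables (k : R.-pker Theta ~> Xinf x0) (pi : probability Theta R).

Local Notation P := (mixture k pi).
Local Notation B := (@barron_set R X x0 D U P).
Local Notation weight p := ((D%:R : R) ^- size p).

(* Failing strings are enumerated through [pickle_inv], so that
   Borel-Cantelli applies to a sequence of events. *)
Definition failing_cylinder (i : nat) : set (Xinf x0) :=
  if pickle_inv i is Some x then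
    if `[< barron_ok U P x >] then set0 else @cyl _ x0 x
  else set0.

Lemma measurable_failing_cylinder i : measurable (failing_cylinder i).
Proof.
rewrite /failing_cylinder; case: pickle_inv => [x|//].
by case: ifP => _ //; exact: measurable_cyl.
Qed.

Definition failing_index i :=
  `[< exists x, [/\ pickle_inv i = Some x, ~ barron_ok U P x & (0 < P x)%E] >].

Definition failure_witness i (p : seq 'I_D) := forall x,
  pickle_inv i = Some x -> ~ barron_ok U P x -> (0 < P x)%E ->
  U p = Some x /\ (P x <= (weight p)%:E)%E.

Lemma failure_witnesses : {q : nat -> seq 'I_D & forall i, failure_witness i (q i)}.
Proof.
apply: choice => i.
have [[x [ix not_ok Px_gt0]]|none] :=
  pselect (exists x, [/\ pickle_inv i = Some x, ~ barron_ok U P x & (0 < P x)%E]).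
  have [p Up Px_le] :=
    program_of_not_barron_ok D_gt1 Px_gt0 (mixture_fin_num _ _ _) not_ok.
  by exists p => y; rewrite ix => -[<-].
by exists [::] => y iy not_ok Py_gt0; case: none; exists y.
Qed.

Section FailurePrograms.
Variable q : nat -> seq 'I_D.
Hypothesis q_witness : forall i, failure_witness i (q i).

Lemma failing_mass_le_weight i :
  (\int[pi]_th k th (failing_cylinder i) <=
    if failing_index i then (weight (q i))%:E else 0)%E.
Proof.
have weight_ge0 : (0 <= if failing_index i then (weight (q i))%:E else 0)%E.
  by case: ifP => // _; rewrite lee_fin invr_ge0 exprn_ge0.
rewrite /failing_cylinder; case ix: pickle_inv => [x|]; last first.
  by under eq_integral do rewrite measure0; rewrite integral0.
case: asboolP => [_|not_ok].
  by under eq_integral do rewrite measure0; rewrite integral0.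
have [Px_gt0|Px_le0] := ltP 0%E (P x); last exact: le_trans Px_le0 weight_ge0.
have -> : failing_index i by apply/asboolP; exists x.
exact: (q_witness ix not_ok Px_gt0).2.
Qed.

Lemma failure_witness_output i : failing_index i ->
  exists x, pickle_inv i = Some x /\ U (q i) = Some x.
Proof.
by move=> /asboolP[x [ix not_ok Px_gt0]]; exists x; have [] := q_witness ix not_ok Px_gt0.
Qed.

Lemma partial_failing_mass_le1 n :
  (\sum_(0 <= i < n) \int[pi]_th k th (failing_cylinder i) <= 1)%E.
Proof.
apply: (@le_trans _ _ (\sum_(0 <= i < n)
    if failing_index i then (weight (q i))%:E else 0)%E).
  by apply: lee_sum => i _; exact: failing_mass_le_weight.
rewrite -big_mkcond -big_filter sumEFin lee_fin.
rewrite -(big_map q xpredT (fun p => weight p)).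
apply: kraft_inequality; first exact: ltnW.
- rewrite map_inj_in_uniq ?filter_uniq ?iota_uniq // => i j.
  rewrite !mem_filter => /andP[/failure_witness_output[x [ix Uqi]] _].
  move=> /andP[/failure_witness_output[y [iy Uqj]] _] qij.
  move: Uqj; rewrite -qij Uqi => -[xy].
  by rewrite -(@pickle_invK (seq X) i) -(@pickle_invK (seq X) j) ix iy xy.
- move=> _ _ /mapP[i + ->] /mapP[j + ->]; rewrite !mem_filter.
  move=> /andP[/failure_witness_output[x [_ Uqi]] _].
  move=> /andP[/failure_witness_output[y [_ Uqj]] _].
  by apply: U_prefix_free; rewrite ?Uqi ?Uqj.
Qed.

End FailurePrograms.

Lemma sum_failing_mass_le1 :
  (\sum_(i <oo) \int[pi]_th k th (failing_cylinder i) <= 1)%E.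
Proof.
have [q q_witness] := failure_witnesses.
apply: lime_le; first by apply: is_cvg_nneseries => i _ _; exact: integral_ge0.
by apply: nearW; exact: partial_failing_mass_le1 q_witness.
Qed.

Lemma integrable_failing_mass_series :
  pi.-integrable setT (fun th => \sum_(i <oo) k th (failing_cylinder i))%E.
Proof.
have mk i : measurable_fun setT (fun th => k th (failing_cylinder i)).
  exact: measurable_kernel k _ (measurable_failing_cylinder i).
apply/integrableP; split.
  by apply: ge0_emeasurable_sum => // i th _ _; exact: measure_ge0.
under eq_integral do rewrite gee0_abs ?nneseries_ge0 //.
rewrite integral_nneseries //; exact: le_lt_trans sum_failing_mass_le1 (ltry _).
Qed.

Lemma measurable_barron_set : measurable B.
Proof.
have -> : B = \bigcup_N \bigcap_(n in [set n | (N <= n)%N])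
    [set w : Xinf x0 | barron_ok U P (pre n w)].
  by apply/seteqP; split => w /= [N]; [exists N | move=> _; exists N].
apply: bigcup_measurable => N _; apply: bigcap_measurableType => n _.
exact: measurable_pre_preimage.
Qed.

Lemma not_barron_sub_lim_sup : ~` B `<=` lim_sup_set failing_cylinder.
Proof.
move=> w not_B M _; have [N pickle_ge] := pickle_pre_ge X M.
have [n [lt_Nn not_ok]] : exists n, (N < n)%N /\ ~ barron_ok U P (pre n w).
  apply: contrapT => all_ok; apply: not_B; exists N.+1 => n lt_Nn.
  by apply: contrapT => not_ok; apply: all_ok; exists n.
exists (pickle (pre n w)); first exact: pickle_ge.
by rewrite /failing_cylinder pickleK_inv; case: asboolP => // _; exact: cyl_pre.
Qed.

Lemma barron_set_ae : {ae pi, forall th, k th B = 1%E}.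
Proof.
apply: filterS (integrable_ae measurableT integrable_failing_mass_series).
move=> th /(_ I) /fin_numPlt/andP[_ series_fin].
have mlim_sup : measurable (lim_sup_set failing_cylinder).
  apply: bigcap_measurableType => n _; apply: bigcup_measurable => j _.
  exact: measurable_failing_cylinder.
have lim_sup0 : k th (lim_sup_set failing_cylinder) = 0%E.
  exact: lim_sup_set_cvg0 measurable_failing_cylinder series_fin.
have not_B0 : k th (~` B) = 0%E.
  apply/eqP; rewrite eq_le measure_ge0 andbT -lim_sup0 le_measure ?inE //.
  - exact: measurableC measurable_barron_set.
  - exact: not_barron_sub_lim_sup.
have mB := measurable_barron_set.
by rewrite -(measureU0 mB (measurableC mB) not_B0) setUv prob_kernel.
Qed.

End BarronRandomness.

Unset Implicit Arguments. Set Strict Implicit.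

Theorem corollary2 (R : realType) (X : countType) (x0 : X) (D : nat)
    (hD : (1 < D)%N) (U : machine X D) (hU : universal_prefix_machine U)
    (dT : measure_display) (Theta : measurableType dT)
    (k : R.-pker Theta ~> Xinf x0) (pi : probability Theta R) :
  {ae pi, forall th : Theta,
     k th (@barron_set R X x0 D U (mixture k pi)) = 1%E}.
Proof.
exact: (barron_set_ae hD hU.1.2 k pi).
Qed.
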